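(* A connected GSC $F=F(N,\mathcal D)$ is fragile if and only if there is a point $x\in F$ such that deleting from the labelled first Hata graph all edges labelled $x$ yields a disconnected graph.
   Context: GSC: $N\ge2$, $\mathcal D\subset\{0,\dots,N-1\}^2$ with $1<|\mathcal D|<N^2$, $\varphi_i(x)=\frac1N(x+i)$, $F$ the attractor $F=\bigcup_{i\in\mathcal D}\varphi_i(F)$. The first Hata graph $\Gamma_1$ has vertex set $\mathcal D$ and an edge between distinct $i,j$ iff $\varphi_i(F)\cap\varphi_j(F)\ne\varnothing$. In the labelled first Hata graph, an edge $\{i,j\}$ carries the label $x\in F$ iff $\varphi_i(F)\cap\varphi_j(F)=\{x\}$ (edges whose intersection is not a singleton carry no label). $F$ is fragile if there is a partition $\mathcal D=\mathcal D_1\cup\mathcal D_2$ into disjoint nonempty sets with $\big(\bigcup_{i\in\mathcal D_1}\varphi_i(F)\big)\cap\big(\bigcup_{i\in\mathcal D_2}\varphi_i(F)\big)$ a singleton. *)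

From HB Require Import structures.
From mathcomp Require Import all_boot all_order all_algebra.
From mathcomp Require Import all_classical all_reals all_analysis.
Set Implicit Arguments. Unset Strict Implicit. Unset Printing Implicit Defensive.
Import Order.TTheory GRing.Theory Num.Theory.
Import numFieldNormedType.Exports.
Local Open Scope classical_set_scope.
Local Open Scope ring_scope.

Definition digit (N : nat) := ('I_N * 'I_N)%type.

Definition gsc_map {R : realType} (N : nat) (i : digit N) (p : R * R) : R * R :=
  ((p.1 + (nat_of_ord i.1)%:R) / N%:R, (p.2 + (nat_of_ord i.2)%:R) / N%:R).
Arguments gsc_map {R} N i p.

(* F is the attractor of the IFS {phi_i : i in D}: the (by Hutchinson unique)
   nonempty compact set with F = \bigcup_{i in D} phi_i(F). *)
Definition is_gsc_attractor {R : realType} (N : nat) (D : {set digit N})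
    (F : set (R * R)) : Prop :=
  [/\ F !=set0, compact F &
      F = \bigcup_(i in [set i | i \in D]) (gsc_map N i @` F)].
Arguments is_gsc_attractor {R} N D F.

Definition hata_edge {R : realType} (N : nat) (F : set (R * R)) (i j : digit N) : Prop :=
  i <> j /\ (gsc_map N i @` F) `&` (gsc_map N j @` F) !=set0.
Arguments hata_edge {R} N F i j.

Definition hata_label {R : realType} (N : nat) (F : set (R * R)) (i j : digit N)
    (x : R * R) : Prop :=
  (gsc_map N i @` F) `&` (gsc_map N j @` F) = [set x].
Arguments hata_label {R} N F i j x.

Definition hata_rel_del {R : realType} (N : nat) (D : {set digit N})
    (F : set (R * R)) (x : R * R) : rel (digit N) :=
  fun i j => [&& i \in D, j \in D &
     `[< hata_edge N F i j /\ ~ hata_label N F i j x >] ].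
Arguments hata_rel_del {R} N D F x.

Definition graph_connected (T : finType) (D : {set T}) (e : rel T) : Prop :=
  forall i j, i \in D -> j \in D -> connect e i j.

Definition fragile {R : realType} (N : nat) (D : {set digit N}) (F : set (R * R)) : Prop :=
  exists D1 D2 : {set digit N},
    [/\ D1 :|: D2 = D, (forall i, i \in D1 -> i \notin D2), (0 < #|D1|)%N, (0 < #|D2|)%N &
      exists x : R * R,
        (\bigcup_(i in [set i | i \in D1]) (gsc_map N i @` F))
        `&` (\bigcup_(i in [set i | i \in D2]) (gsc_map N i @` F)) = [set x]].

Arguments fragile {R} N D F.

From HB Require Import structures.
From mathcomp Require Import all_boot all_order all_algebra.
From mathcomp Require Import all_classical all_reals all_analysis.
Import numFieldNormedType.Exports.
Local Open Scope classical_set_scope.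
Local Open Scope ring_scope.

(* For a set of digits A write U(A) for
   the union of the pieces phi_i(F), i in A.  The key observation links a
   partition D = D1 u D2 with the Hata edges between D1 and D2:
   - if U(D1) and U(D2) meet exactly in {x}, every edge between D1 and D2 is
     labelled x (the two pieces meet, and only inside {x});
   - if D1, D2 are disjoint and every such edge is labelled x, then U(D1) and
     U(D2) meet at most in x.
   Fragile => disconnected: for a fragile split at x no edge leaves D1 once
   the x-edges are deleted, so D1 and D2 are not joined by a path.
   Disconnected => fragile: take for D1 the component of a vertex and
   D2 = D \ D1; edges between them are labelled x, so U(D1) and U(D2) meet at
   most in x.  They are closed (finite unions of continuous images of the
   compact F), nonempty, and cover the connected F, so they do meet. *)

Local Notation pieces N F A :=
  (\bigcup_(i in [set i | i \in A]) (gsc_map N i @` F)).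

Lemma gsc_map_continuous (R : realType) N (i : digit N) :
  continuous (gsc_map (R:=R) N i).
Proof.
move=> p; rewrite /gsc_map.
have c1 : (fun q : R * R => (q.1 + (nat_of_ord i.1)%:R) / N%:R) @ p -->
          (p.1 + (nat_of_ord i.1)%:R) / N%:R.
  by apply: cvgMr_tmp; apply: cvgD; [exact: cvg_fst | exact: cvg_cst].
have c2 : (fun q : R * R => (q.2 + (nat_of_ord i.2)%:R) / N%:R) @ p -->
          (p.2 + (nat_of_ord i.2)%:R) / N%:R.
  by apply: cvgMr_tmp; apply: cvgD; [exact: cvg_snd | exact: cvg_cst].
exact: cvg_pair c1 c2.
Qed.

Lemma pieces_closed (R : realType) N (A : {set digit N}) (F : set (R * R)) :
  compact F -> closed (pieces N F A).
Proof.
move=> cF; apply: closed_bigcup; first exact: finite_finset.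
move=> i _; apply: compact_closed; first exact: norm_hausdorff.
by apply: continuous_compact => //; apply: continuous_subspaceT;
  exact: gsc_map_continuous.
Qed.

Lemma pieces_setU (R : realType) N (F : set (R * R)) (A B : {set digit N}) :
  pieces N F (A :|: B) = pieces N F A `|` pieces N F B.
Proof.
apply/seteqP; split=> z.
  by case=> i /=; rewrite inE => /orP[iA | iB] Hz; [left | right]; exists i.
by case=> -[i /= Hi Hz]; exists i => //=; rewrite inE Hi ?orbT.
Qed.

Lemma connected_closed_cover_meet (T : topologicalType) (A B : set T) :
  connected (A `|` B) -> closed A -> closed B ->
  A !=set0 -> B !=set0 -> A `&` B !=set0.
Proof.
move=> conAB clA clB A0 B0; apply/set0P/negP => /eqP AB0.
apply: (proj2 (connectedPn (A `|` B))) conAB.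
exists (fun b => if b then B else A); split; first by case.
- by [].
- by rewrite /separated -(proj1 (closure_id A) clA) -(proj1 (closure_id B) clB).
Qed.

Lemma connect_forward_closed {T : finType} {e : rel T} {A : {set T}} {x y : T} :
  (forall a b, a \in A -> e a b -> b \in A) ->
  connect e x y -> x \in A -> y \in A.
Proof.
move=> clA /connectP [p + ->]; elim: p x => //= z p IH x /andP[exz pz] xA.
exact: IH pz (clA _ _ xA exz).
Qed.

Lemma not_graph_connected_witness {T : finType} {D : {set T}} {e : rel T} :
  ~ graph_connected D e ->
  exists i j, [/\ i \in D, j \in D & ~ connect e i j].
Proof.
move=> nconn; apply: contrapT => noPair; apply: nconn => i j iD jD.
by apply: contrapT => nij; apply: noPair; exists i, j.
Qed.

Lemma cross_edge_labelled (R : realType) N (F : set (R * R))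
    (D1 D2 : {set digit N}) (x : R * R) a b :
  pieces N F D1 `&` pieces N F D2 = [set x] ->
  a \in D1 -> b \in D2 -> hata_edge N F a b -> hata_label N F a b x.
Proof.
move=> Ux aD1 bD2 [_ [w [wa wb]]].
have sub : (gsc_map N a @` F) `&` (gsc_map N b @` F) `<=` [set x].
  by move=> z [za zb]; rewrite -Ux; split; [exists a | exists b].
apply/seteqP; split=> // z /= ->.
by rewrite -(sub w (conj wa wb)).
Qed.

Lemma labelled_cut_meet_sub {R : realType} {N} {F : set (R * R)}
    {D1 D2 : {set digit N}} {x : R * R} :
  (forall a, a \in D1 -> a \notin D2) ->
  (forall a b, a \in D1 -> b \in D2 -> hata_edge N F a b -> hata_label N F a b x) ->
  pieces N F D1 `&` pieces N F D2 `<=` [set x].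
Proof.
move=> disj lab _ [[a /= aD1 [p Fp <-]] [b /= bD2 [q Fq qp]]].
have ab : a <> b by move=> ab; move: (disj _ aD1); rewrite ab bD2.
have meet : ((gsc_map N a @` F) `&` (gsc_map N b @` F)) (gsc_map N a p).
  by split; [exists p | exists q].
by move: (meet); rewrite (lab a b aD1 bD2 (conj ab (ex_intro _ _ meet))).
Qed.

Section Attractor.

Variables (R : realType) (N : nat) (D : {set digit N}) (F : set (R * R)).
Hypothesis attrF : is_gsc_attractor N D F.

Lemma piece_sub i : i \in D -> gsc_map N i @` F `<=` F.
Proof. by case: attrF => _ _ FE iD z Hz; rewrite FE; exists i. Qed.

Lemma fragile_disconnects : fragile N D F ->
  exists x : R * R, F x /\ ~ graph_connected D (hata_rel_del N D F x).
Proof.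
case=> D1 [D2 [UD disj /card_gt0P[i0 i0D1] /card_gt0P[j0 j0D2] [x Ux]]].
have inD k : k \in D1 \/ k \in D2 -> k \in D.
  by rewrite -UD inE => -[-> | ->]; rewrite ?orbT.
exists x; split.
  have : (pieces N F D1 `&` pieces N F D2) x by rewrite Ux.
  by case=> -[i iD1 xi] _; exact: piece_sub (inD i (or_introl iD1)) _ xi.
move=> conn.
have closedD1 a b : a \in D1 -> hata_rel_del N D F x a b -> b \in D1.
  move=> aD1 /and3P[_ + /asboolP [eab nlab]].
  rewrite -UD inE => /orP[// | bD2].
  by case: nlab; exact: cross_edge_labelled Ux aD1 bD2 eab.
have i0j0 := conn _ _ (inD _ (or_introl i0D1)) (inD _ (or_intror j0D2)).
have j0D1 := connect_forward_closed closedD1 i0j0 i0D1.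
by move: (disj _ j0D1); rewrite j0D2.
Qed.

Hypothesis conF : connected F.

(* If the x-edges separate the Hata graph, the component of a vertex and its
   complement give a fragile split at x. *)
Lemma disconnected_fragile x :
  ~ graph_connected D (hata_rel_del N D F x) -> fragile N D F.
Proof.
set e := hata_rel_del N D F x => nconn.
have [i0 [j0 [i0D j0D ni0j0]]] := not_graph_connected_witness nconn.
pose D1 := [set j in D | connect e i0 j]; pose D2 := D :\: D1.
have i0D1 : i0 \in D1 by rewrite inE i0D connect0.
have j0D2 : j0 \in D2 by rewrite !inE j0D andbT; apply/negP => /andP[].
have partD : D1 :|: D2 = D.
  by apply/setP => k; rewrite !inE; case: (k \in D); case: (connect e i0 k).
have disj a : a \in D1 -> a \notin D2 by rewrite !inE => /andP[-> ->].
(* An unlabelled edge leaving the component D1 would extend it. *)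
have cut_labelled a b : a \in D1 -> b \in D2 ->
    hata_edge N F a b -> hata_label N F a b x.
  rewrite !inE => /andP[aD ca] /andP[nbD1 bD] eab; apply: contrapT => nlab.
  have eab' : e a b by rewrite /e /hata_rel_del aD bD /=; apply/asboolP.
  by move: nbD1; rewrite bD (connect_trans ca (connect1 eab')).
have [[f0 Ff0] cF FE] := attrF.
have [y [y1 y2]] : pieces N F D1 `&` pieces N F D2 !=set0.
  apply: connected_closed_cover_meet.
  - by rewrite -pieces_setU partD -FE.
  - exact: pieces_closed.
  - exact: pieces_closed.
  - by exists (gsc_map N i0 f0); [exists i0; [exact: i0D1 | exists f0]].
  - by exists (gsc_map N j0 f0); [exists j0; [exact: j0D2 | exists f0]].
have meet_sub := labelled_cut_meet_sub disj cut_labelled.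
exists D1, D2; split=> //.
- by apply/card_gt0P; exists i0; exact: i0D1.
- by apply/card_gt0P; exists j0; exact: j0D2.
- exists x; apply/seteqP; split=> // z /= ->.
  by rewrite -(meet_sub y (conj y1 y2)).
Qed.

End Attractor.

Theorem mainTheorem11 (R : realType) (N : nat) (D : {set digit N})
    (F : set (R * R)) :
  (2 <= N)%N -> (1 < #|D|)%N -> (#|D| < N ^ 2)%N ->
  is_gsc_attractor N D F ->
  connected F ->
  (fragile N D F <->
   exists x : R * R, F x /\ ~ graph_connected D (hata_rel_del N D F x)).
Proof.
move=> _ _ _ attrF conF; split; first exact: fragile_disconnects.
by case=> x [_ nconn]; exact: disconnected_fragile nconn.
Qed.
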